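(* Let $D=\{(s,q)\in\mathbb{H}\times\mathbb{H}: q^2-2q\,\mathrm{Re}[s]+|s|^2\neq0\}$ and define $F:D\to\mathbb{H}$ by $$F(s,q)=-\big(q^2-2q\,\mathrm{Re}[s]+|s|^2\big)^{-1}(q-\bar s).$$ Then for every point $(s_*,q_* )\in(\mathbb{H}\times\mathbb{H})\setminus D$, $F$ admits no continuous extension to $D\cup\{(s_*,q_* )\}$. In particular, for every $s\in\mathbb{H}\setminus\mathbb{R}$ the limit $\lim_{q\to\bar s}F(s,q)$ (over $q$ with $(s,q)\in D$) does not exist.
   Context: $\mathbb{H}$ denotes the algebra of quaternions; $\bar s$, $|s|$, $\mathrm{Re}[s]$ are conjugate, norm and real part. *)

From Stdlib Require Import Reals Lra.
Open Scope R_scope.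

(* Quaternion a0 + a1 i + a2 j + a3 k *)
Record quat : Type := Quat { q0 : R; q1 : R; q2 : R; q3 : R }.

Definition qreal (r : R) : quat := Quat r 0 0 0.
Definition qadd (a b : quat) : quat :=
  Quat (q0 a + q0 b) (q1 a + q1 b) (q2 a + q2 b) (q3 a + q3 b).
Definition qopp (a : quat) : quat := Quat (- q0 a) (- q1 a) (- q2 a) (- q3 a).
Definition qsub (a b : quat) : quat := qadd a (qopp b).
(* Hamilton product: i^2 = j^2 = k^2 = ijk = -1 *)
Definition qmul (a b : quat) : quat :=
  Quat (q0 a * q0 b - q1 a * q1 b - q2 a * q2 b - q3 a * q3 b)
       (q0 a * q1 b + q1 a * q0 b + q2 a * q3 b - q3 a * q2 b)
       (q0 a * q2 b - q1 a * q3 b + q2 a * q0 b + q3 a * q1 b)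
       (q0 a * q3 b + q1 a * q2 b - q2 a * q1 b + q3 a * q0 b).
Definition qconj (a : quat) : quat := Quat (q0 a) (- q1 a) (- q2 a) (- q3 a).
Definition qre (a : quat) : R := q0 a.
Definition qnorm (a : quat) : R :=
  sqrt (q0 a ^ 2 + q1 a ^ 2 + q2 a ^ 2 + q3 a ^ 2).
Definition qinv (a : quat) : quat :=
  qmul (qreal (/ (qnorm a ^ 2))) (qconj a).

Definition qdist (a b : quat) : R := qnorm (qsub a b).

Definition Delta (s q : quat) : quat :=
  qadd (qsub (qmul q q) (qmul q (qreal (2 * qre s)))) (qreal (qnorm s ^ 2)).

Definition inD (p : quat * quat) : Prop := Delta (fst p) (snd p) <> qreal 0.

Definition F (p : quat * quat) : quat :=
  qopp (qmul (qinv (Delta (fst p) (snd p))) (qsub (snd p) (qconj (fst p)))).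

Definition pdist (x y : quat * quat) : R :=
  sqrt (qdist (fst x) (fst y) ^ 2 + qdist (snd x) (snd y) ^ 2).

Definition continuous_on (E : quat * quat -> Prop) (G : quat * quat -> quat) : Prop :=
  forall x, E x -> forall eps, 0 < eps -> exists delta, 0 < delta /\
    forall y, E y -> pdist y x < delta -> qdist (G y) (G x) < eps.

Definition is_real_quat (s : quat) : Prop := q1 s = 0 /\ q2 s = 0 /\ q3 s = 0.

From Pilot Require Import Defs.
From Stdlib Require Import Reals Lra Psatz Classical.
Open Scope R_scope.

(* Write s = a + v and q = c + u (real part plus imaginary
   part).  Then Delta s q = (q - a)^2 + |v|^2, so q lies outside the domain D
   exactly when c = a and |u| = |v|: the "sphere" of s.  Since the quaternion
   norm is multiplicative, |F(s,q)| = |q - conj s| / |Delta s q| on D.  We show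
   that F(s,.) is unbounded near every point q of the sphere:
   - if q <> conj s, moving q along the real axis, q' = q + t, gives
     |Delta| = t sqrt(t^2 + 4|u|^2) = O(t) while |q' - conj s| >= |u + v| > 0;
   - if q = conj s, moving q along an imaginary direction w orthogonal to v,
     q' = q + t w, gives Delta = -t^2 |w|^2 and |q' - conj s| = t |w|.
   In both cases t^2 |F(s,q')|^2 stays bounded below while |q' - q| = O(t).
   Unboundedness forbids any finite value at (s,q), which rules out a
   continuous extension (first claim), and since conj s itself lies on the
   sphere it also rules out the limit at q -> conj s (second claim). *)

(* Algebra of the quaternion norm.  [Defs.Delta] is written qualified because
   the Reals library exports another [Delta]. *)

Lemma qnorm_sq (x : quat) : qnorm x ^ 2 = q0 x ^ 2 + q1 x ^ 2 + q2 x ^ 2 + q3 x ^ 2.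
Proof. unfold qnorm; apply pow2_sqrt; nra. Qed.

Lemma qnorm_nonneg (x : quat) : 0 <= qnorm x.
Proof. apply sqrt_pos. Qed.

(* Euler's four-square identity: the norm is multiplicative. *)
Lemma qnorm_mul (x y : quat) : qnorm (qmul x y) = qnorm x * qnorm y.
Proof.
  unfold qnorm; rewrite <- sqrt_mult by nra; f_equal.
  destruct x, y; simpl; ring.
Qed.

Lemma qnorm_real (r : R) : qnorm (qreal r) = Rabs r.
Proof.
  unfold qnorm; simpl. rewrite <- sqrt_Rsqr_abs. f_equal. unfold Rsqr. ring.
Qed.

Lemma qnorm_conj (x : quat) : qnorm (qconj x) = qnorm x.
Proof. unfold qnorm; simpl; f_equal; ring. Qed.

Lemma qnorm_opp (x : quat) : qnorm (qopp x) = qnorm x.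
Proof. unfold qnorm; simpl; f_equal; ring. Qed.

Lemma qnorm_pos (x : quat) : x <> qreal 0 -> 0 < qnorm x.
Proof.
  intros Hx. destruct (qnorm_nonneg x) as [|H0]; [assumption|exfalso].
  assert (Hsq : q0 x ^ 2 + q1 x ^ 2 + q2 x ^ 2 + q3 x ^ 2 = 0)
    by (rewrite <- qnorm_sq, <- H0; ring).
  apply Hx; destruct x as [x0 x1 x2 x3]; unfold qreal; simpl in Hsq.
  f_equal; nra.
Qed.

Lemma qnorm_inv (x : quat) : x <> qreal 0 -> qnorm (qinv x) * qnorm x = 1.
Proof.
  intros Hx. pose proof (qnorm_pos x Hx).
  unfold qinv. rewrite qnorm_mul, qnorm_real, qnorm_conj.
  rewrite Rabs_pos_eq by (apply Rlt_le, Rinv_0_lt_compat, pow_lt; lra).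
  field. lra.
Qed.

(* Triangle inequality, via Cauchy-Schwarz in R^4 (Lagrange's identity). *)
Lemma qnorm_triangle (x y : quat) : qnorm (qadd x y) <= qnorm x + qnorm y.
Proof.
  pose proof (qnorm_nonneg x) as Nx; pose proof (qnorm_nonneg y) as Ny.
  set (dot := q0 x * q0 y + q1 x * q1 y + q2 x * q2 y + q3 x * q3 y).
  assert (Hcs : dot ^ 2 <= (qnorm x * qnorm y) ^ 2).
  { rewrite Rpow_mult_distr, !qnorm_sq; unfold dot.
    destruct x as [x0 x1 x2 x3], y as [y0 y1 y2 y3]; simpl.
    assert (Lagrange : (x0^2+x1^2+x2^2+x3^2) * (y0^2+y1^2+y2^2+y3^2)
      - (x0*y0+x1*y1+x2*y2+x3*y3)^2
      = (x0*y1-x1*y0)^2 + (x0*y2-x2*y0)^2 + (x0*y3-x3*y0)^2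
      + (x1*y2-x2*y1)^2 + (x1*y3-x3*y1)^2 + (x2*y3-x3*y2)^2) by ring.
    pose proof (pow2_ge_0 (x0*y1-x1*y0)); pose proof (pow2_ge_0 (x0*y2-x2*y0));
    pose proof (pow2_ge_0 (x0*y3-x3*y0)); pose proof (pow2_ge_0 (x1*y2-x2*y1));
    pose proof (pow2_ge_0 (x1*y3-x3*y1)); pose proof (pow2_ge_0 (x2*y3-x3*y2)).
    lra. }
  assert (Hdot : dot <= qnorm x * qnorm y).
  { apply Rsqr_incr_0_var; [rewrite !Rsqr_pow2; exact Hcs|nra]. }
  apply Rsqr_incr_0_var; [|lra]. rewrite !Rsqr_pow2.
  assert (Hsum : qnorm (qadd x y) ^ 2 = qnorm x ^ 2 + qnorm y ^ 2 + 2 * dot).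
  { rewrite !qnorm_sq; unfold dot; destruct x, y; simpl; ring. }
  nra.
Qed.

Lemma qdist_lower (x L : quat) : qnorm x - qnorm L <= qdist x L.
Proof.
  assert (Hx : x = qadd (qsub x L) L)
    by (destruct x, L; unfold qsub, qadd, qopp; simpl; f_equal; ring).
  rewrite Hx at 1. pose proof (qnorm_triangle (qsub x L) L). unfold qdist. lra.
Qed.

Lemma qdist_sq (x y : quat) :
  qdist x y ^ 2 = (q0 x - q0 y) ^ 2 + (q1 x - q1 y) ^ 2 + (q2 x - q2 y) ^ 2 + (q3 x - q3 y) ^ 2.
Proof. unfold qdist; rewrite qnorm_sq; simpl; ring. Qed.

Lemma qnorm_F (s q : quat) :
  inD (s, q) -> qnorm (F (s, q)) * qnorm (Defs.Delta s q) = qnorm (qsub q (qconj s)).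
Proof.
  unfold inD, F; simpl; intros HD.
  rewrite qnorm_opp, qnorm_mul.
  rewrite Rmult_comm, <- Rmult_assoc, (Rmult_comm _ (qnorm (qinv _))), qnorm_inv by exact HD.
  ring.
Qed.

Lemma qnorm_F_sq (s q : quat) : inD (s, q) ->
  qnorm (F (s, q)) ^ 2 * qnorm (Defs.Delta s q) ^ 2 = qnorm (qsub q (qconj s)) ^ 2.
Proof. intros HD. rewrite <- qnorm_F by exact HD. ring. Qed.

Lemma Delta_coords (a v1 v2 v3 c u1 u2 u3 : R) :
  Defs.Delta (Quat a v1 v2 v3) (Quat c u1 u2 u3) =
  Quat ((c - a) ^ 2 - (u1 ^ 2 + u2 ^ 2 + u3 ^ 2) + (v1 ^ 2 + v2 ^ 2 + v3 ^ 2))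
       (2 * (c - a) * u1) (2 * (c - a) * u2) (2 * (c - a) * u3).
Proof.
  unfold Defs.Delta, qsub, qadd, qopp, qmul, qreal, qre; rewrite qnorm_sq; simpl.
  f_equal; ring.
Qed.

Lemma Delta_eq0_sphere (a v1 v2 v3 c u1 u2 u3 : R) :
  Defs.Delta (Quat a v1 v2 v3) (Quat c u1 u2 u3) = qreal 0 ->
  c = a /\ u1 ^ 2 + u2 ^ 2 + u3 ^ 2 = v1 ^ 2 + v2 ^ 2 + v3 ^ 2.
Proof.
  rewrite Delta_coords; unfold qreal; intros E; injection E as E0 E1 E2 E3.
  assert (Hc : c = a).
  { destruct (Req_dec c a) as [|Hne]; [assumption|exfalso].
    assert (Hca : c - a <> 0) by lra.
    assert (u1 = 0 /\ u2 = 0 /\ u3 = 0) as (-> & -> & ->).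
    { repeat split; apply (Rmult_eq_reg_l (2 * (c - a))); lra || (intro; lra). }
    assert (0 < (c - a) ^ 2) by (rewrite <- Rsqr_pow2; apply Rsqr_pos_lt; exact Hca).
    nra. }
  subst c; split; [reflexivity|lra].
Qed.

Lemma Delta_conj (s : quat) : Defs.Delta s (qconj s) = qreal 0.
Proof. destruct s; unfold qconj; simpl; rewrite Delta_coords; unfold qreal; f_equal; ring. Qed.

Lemma inD_of_real_Delta (s q : quat) (r : R) :
  Defs.Delta s q = qreal r -> r <> 0 -> inD (s, q).
Proof. unfold inD; simpl; intros -> Hr E; apply Hr; exact (f_equal q0 E). Qed.

Definition blowup_at (s q : quat) : Prop :=
  exists C K, 0 < C /\ 0 < K /\ forall t, 0 < t <= 1 ->
    exists q', inD (s, q') /\ qdist q' q ^ 2 = K * t ^ 2 /\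
               C <= t ^ 2 * qnorm (F (s, q')) ^ 2.

Definition unbounded_near (s q : quat) : Prop :=
  forall M delta, 0 < delta -> exists q', inD (s, q') /\
    0 < qdist q' q < delta /\ M <= qnorm (F (s, q')).

Lemma exists_small_param (A B : R) :
  0 <= A -> 0 <= B -> exists t, 0 < t <= 1 /\ A * t < 1 /\ B * t < 1.
Proof.
  intros HA HB. exists (/ (1 + A + B)).
  assert (Hpos : 0 < / (1 + A + B)) by (apply Rinv_0_lt_compat; lra).
  assert (Hone : / (1 + A + B) + A * / (1 + A + B) + B * / (1 + A + B) = 1)
    by (field; lra).
  assert (0 <= A * / (1 + A + B)) by (apply Rmult_le_pos; lra).
  assert (0 <= B * / (1 + A + B)) by (apply Rmult_le_pos; lra).
  repeat split; lra.
Qed.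

(* Taking t small makes |q' - q| small and |F(s,q')| ~ 1/t large. *)
Lemma blowup_unbounded (s q : quat) : blowup_at s q -> unbounded_near s q.
Proof.
  intros (C & K & HC & HK & Hpath) M delta Hdelta.
  assert (Hd2 : 0 < delta ^ 2) by (apply pow_lt; lra).
  destruct (exists_small_param (K / delta ^ 2) (M ^ 2 / C)) as (t & Ht & HKt & HMt).
  { apply Rlt_le, Rdiv_lt_0_compat; lra. }
  { apply Rmult_le_pos; [apply pow2_ge_0|apply Rlt_le, Rinv_0_lt_compat; lra]. }
  destruct (Hpath t Ht) as (q' & Hin & Hdist & HF).
  assert (Htt : t ^ 2 <= t) by nra.
  assert (HKt' : K * t < delta ^ 2).
  { apply (Rmult_lt_reg_r (/ delta ^ 2)); [apply Rinv_0_lt_compat; lra|].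
    rewrite Rinv_r by lra. unfold Rdiv in HKt. lra. }
  assert (HMt' : M ^ 2 * t < C).
  { apply (Rmult_lt_reg_r (/ C)); [apply Rinv_0_lt_compat; lra|].
    rewrite Rinv_r by lra. unfold Rdiv in HMt. lra. }
  pose proof (qnorm_nonneg (qsub q' q)) as Hd0; fold (qdist q' q) in Hd0.
  pose proof (qnorm_nonneg (F (s, q'))) as HF0.
  exists q'; split; [exact Hin|split; [split|]].
  - assert (0 < qdist q' q ^ 2) by (rewrite Hdist; apply Rmult_lt_0_compat; [lra|apply pow_lt; lra]).
    destruct Hd0 as [|E]; [assumption|rewrite <- E in *; lra].
  - nra.
  - destruct (Rle_or_lt M 0); [lra|].
    apply Rsqr_incr_0_var; [rewrite !Rsqr_pow2|exact HF0]. nra.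
Qed.

(* Away from conj s, moving q along the real axis makes F blow up. *)
Lemma blowup_real_direction (a v1 v2 v3 u1 u2 u3 : R) :
  u1 ^ 2 + u2 ^ 2 + u3 ^ 2 = v1 ^ 2 + v2 ^ 2 + v3 ^ 2 ->
  0 < (u1 + v1) ^ 2 + (u2 + v2) ^ 2 + (u3 + v3) ^ 2 ->
  blowup_at (Quat a v1 v2 v3) (Quat a u1 u2 u3).
Proof.
  set (U := u1 ^ 2 + u2 ^ 2 + u3 ^ 2); set (P := (u1 + v1) ^ 2 + (u2 + v2) ^ 2 + (u3 + v3) ^ 2).
  intros HUV HP.
  assert (HU : 0 <= U) by (unfold U; nra).
  exists (P / (1 + 4 * U)), 1; split; [apply Rdiv_lt_0_compat; lra|split; [lra|]].
  intros t Ht; exists (Quat (a + t) u1 u2 u3).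
  assert (HD : Defs.Delta (Quat a v1 v2 v3) (Quat (a + t) u1 u2 u3) =
                Quat (t ^ 2) (2 * t * u1) (2 * t * u2) (2 * t * u3)).
  { rewrite Delta_coords; f_equal; [unfold U in HUV; rewrite HUV|..]; ring. }
  assert (Ht2 : 0 < t ^ 2) by (apply pow_lt; lra).
  assert (Hin : inD (Quat a v1 v2 v3, Quat (a + t) u1 u2 u3)).
  { unfold inD; simpl; rewrite HD; intro E; apply f_equal with (f := q0) in E.
    simpl in E; lra. }
  split; [exact Hin|split].
  - rewrite qdist_sq; simpl; ring.
  - assert (HDn : qnorm (Defs.Delta (Quat a v1 v2 v3) (Quat (a + t) u1 u2 u3)) ^ 2
                   = t ^ 2 * (t ^ 2 + 4 * U))
      by (rewrite HD, qnorm_sq; simpl; unfold U; ring).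
    assert (Hnum : qnorm (qsub (Quat (a + t) u1 u2 u3) (qconj (Quat a v1 v2 v3))) ^ 2
                   = t ^ 2 + P)
      by (rewrite qnorm_sq; simpl; unfold P; ring).
    set (X := t ^ 2 * qnorm (F (Quat a v1 v2 v3, Quat (a + t) u1 u2 u3)) ^ 2).
    assert (HX : X * (t ^ 2 + 4 * U) = t ^ 2 + P).
    { rewrite <- Hnum, <- qnorm_F_sq, HDn by exact Hin. unfold X; ring. }
    assert (HX0 : 0 <= X) by (unfold X; apply Rmult_le_pos; apply pow2_ge_0).
    assert (Ht1 : t ^ 2 <= 1) by nra.
    apply (Rmult_le_reg_r (1 + 4 * U)); [lra|].
    unfold Rdiv; rewrite Rmult_assoc, Rinv_l, Rmult_1_r by lra.
    nra.
Qed.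

Lemma exists_orthogonal (v1 v2 v3 : R) :
  exists w1 w2 w3, w1 * v1 + w2 * v2 + w3 * v3 = 0 /\ 0 < w1 ^ 2 + w2 ^ 2 + w3 ^ 2.
Proof.
  destruct (Req_dec v1 0) as [->|Hv1].
  - exists 1, 0, 0; split; lra.
  - exists v2, (- v1), 0; split; [ring|].
    assert (0 < v1 ^ 2) by (rewrite <- Rsqr_pow2; apply Rsqr_pos_lt; exact Hv1).
    nra.
Qed.

(* At q = conj s, moving q along an imaginary direction w orthogonal to Im s
   makes F blow up: Delta = -t^2 |w|^2 while q' - conj s = t w. *)
Lemma blowup_at_conj (s : quat) : blowup_at s (qconj s).
Proof.
  destruct s as [a v1 v2 v3].
  destruct (exists_orthogonal v1 v2 v3) as (w1 & w2 & w3 & Horth & HW).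
  set (W := w1 ^ 2 + w2 ^ 2 + w3 ^ 2) in HW.
  exists (/ W), W; split; [apply Rinv_0_lt_compat; lra|split; [lra|]].
  intros t Ht; set (q' := Quat a (- v1 + t * w1) (- v2 + t * w2) (- v3 + t * w3)).
  assert (HD : Defs.Delta (Quat a v1 v2 v3) q' = qreal (- (t ^ 2 * W))).
  { unfold q'; rewrite Delta_coords; unfold qreal, W; f_equal; try ring.
    replace (- (t ^ 2 * (w1 ^ 2 + w2 ^ 2 + w3 ^ 2)))
      with ((a - a) ^ 2 - ((- v1 + t * w1) ^ 2 + (- v2 + t * w2) ^ 2 + (- v3 + t * w3) ^ 2)
            + (v1 ^ 2 + v2 ^ 2 + v3 ^ 2) - 2 * t * (w1 * v1 + w2 * v2 + w3 * v3)).
    - rewrite Horth; ring.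
    - ring. }
  assert (HtW : 0 < t ^ 2 * W) by (apply Rmult_lt_0_compat; [apply pow_lt|]; lra).
  assert (Hin : inD (Quat a v1 v2 v3, q')) by (apply (inD_of_real_Delta _ _ _ HD); lra).
  exists q'; split; [exact Hin|split].
  - rewrite qdist_sq; unfold q', W; simpl; ring.
  - assert (HDn : qnorm (Defs.Delta (Quat a v1 v2 v3) q') ^ 2 = (t ^ 2 * W) ^ 2)
      by (rewrite HD, qnorm_real, <- Rsqr_pow2, <- Rsqr_abs, Rsqr_pow2; ring).
    assert (Hnum : qnorm (qsub q' (qconj (Quat a v1 v2 v3))) ^ 2 = t ^ 2 * W)
      by (rewrite qnorm_sq; unfold q', W; simpl; ring).
    pose proof (qnorm_F_sq _ _ Hin) as HF; rewrite HDn, Hnum in HF.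
    set (X := qnorm (F (Quat a v1 v2 v3, q'))) in HF |- *.
    assert (HX : t ^ 2 * X ^ 2 * W = 1).
    { apply (Rmult_eq_reg_r (t ^ 2 * W)); [|lra].
      transitivity (X ^ 2 * (t ^ 2 * W) ^ 2); [ring|rewrite HF; ring]. }
    right; apply (Rmult_eq_reg_r W); [|lra]. rewrite Rinv_l by lra. lra.
Qed.

Lemma blowup_off_domain (s q : quat) : Defs.Delta s q = qreal 0 -> blowup_at s q.
Proof.
  destruct s as [a v1 v2 v3], q as [c u1 u2 u3].
  intros HD; destruct (Delta_eq0_sphere _ _ _ _ _ _ _ _ HD) as [-> HUV].
  set (P := (u1 + v1) ^ 2 + (u2 + v2) ^ 2 + (u3 + v3) ^ 2).
  pose proof (pow2_ge_0 (u1 + v1)); pose proof (pow2_ge_0 (u2 + v2));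
    pose proof (pow2_ge_0 (u3 + v3)).
  destruct (Req_dec P 0) as [HP|HP].
  - assert (u1 = - v1 /\ u2 = - v2 /\ u3 = - v3) as (-> & -> & ->)
      by (unfold P in HP; repeat split; nra).
    exact (blowup_at_conj (Quat a v1 v2 v3)).
  - apply blowup_real_direction; [exact HUV|unfold P in HP; lra].
Qed.

Lemma far_values_near_boundary (s q L : quat) (delta : R) :
  Defs.Delta s q = qreal 0 -> 0 < delta ->
  exists q', inD (s, q') /\ 0 < qdist q' q < delta /\ 1 <= qdist (F (s, q')) L.
Proof.
  intros HD Hdelta.
  destruct (blowup_unbounded s q (blowup_off_domain s q HD) (qnorm L + 1) delta Hdelta)
    as (q' & Hin & Hdist & HF).
  exists q'; split; [exact Hin|split; [exact Hdist|]].
  pose proof (qdist_lower (F (s, q')) L); lra.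
Qed.

Lemma pdist_fst_fixed (s q q' : quat) : pdist (s, q') (s, q) = qdist q' q.
Proof.
  unfold pdist; cbn [fst snd].
  assert (Hs : qdist s s = 0) by (unfold qdist, qnorm; simpl; rewrite <- sqrt_0; f_equal; ring).
  rewrite Hs; replace (0 ^ 2 + qdist q' q ^ 2) with (qdist q' q ^ 2) by ring.
  apply sqrt_pow2, qnorm_nonneg.
Qed.

Theorem theorem3p9 :
  (forall pstar : quat * quat, ~ inD pstar ->
     ~ exists G : quat * quat -> quat,
         (forall p, inD p -> G p = F p) /\
         continuous_on (fun p => inD p \/ p = pstar) G)
  /\
  (forall s : quat, ~ is_real_quat s ->
     ~ exists L : quat, forall eps, 0 < eps -> exists delta, 0 < delta /\
         forall q : quat, inD (s, q) -> 0 < qdist q (qconj s) < delta ->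
           qdist (F (s, q)) L < eps).
Proof.
  split.
  - intros [s q] Hout (G & HGF & Hcont).
    assert (HD : Defs.Delta s q = qreal 0) by (apply NNPP; exact Hout).
    destruct (Hcont (s, q) (or_intror eq_refl) 1 Rlt_0_1) as (delta & Hdelta & Hnear).
    destruct (far_values_near_boundary s q (G (s, q)) delta HD Hdelta)
      as (q' & Hin & [_ Hclose] & Hfar).
    specialize (Hnear (s, q') (or_introl Hin)).
    rewrite pdist_fst_fixed, HGF in Hnear by exact Hin.
    specialize (Hnear Hclose); lra.
  - intros s _ (L & HL).
    destruct (HL 1 Rlt_0_1) as (delta & Hdelta & Hnear).
    destruct (far_values_near_boundary s (qconj s) L delta (Delta_conj s) Hdelta)
      as (q' & Hin & Hclose & Hfar).
    specialize (Hnear q' Hin Hclose); lra.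
Qed.
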